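(* Let $\mathbf{S}=(S_n)_{n\in\mathbb{N}}$ be a stationary non-ergodic information source with finite (totally ordered) alphabet $A$ and sequence-space model $(A^{\mathbb{N}},\mathcal{Z},m,\sigma)$, let $\{m_s:s\in A^{\mathbb{N}}\}$ be the ergodic decomposition of $m$, and assume that $s\mapsto h_{m_s}(\mathbf{S})$ is $m$-integrable. If the limit $h^*_m(\mathbf{S})=\lim_{L\to\infty}\frac{1}{L-1}H_m(R_1^L)$ exists, then $h^*_m(\mathbf{S})\ge h_m(\mathbf{S})$ and $h^*_m(\mathbf{S})\ge\int_{A^{\mathbb{N}}}h^*_{m_s}(\mathbf{S})\,dm(s)$.
   Context: $m$ is the shift-invariant probability measure on $A^{\mathbb{N}}$ induced by the process, $\mathcal{Z}$ the product $\sigma$-algebra and $\sigma$ the left shift. The ergodic decomposition is a family of $\sigma$-invariant ergodic probability measures $m_s$ with $m_{\sigma(s)}=m_s$ and $m(C)=\int m_s(C)\,dm(s)$ for all $C\in\mathcal{Z}$. For a shift-invariant measure $\nu$, $h_\nu(\mathbf{S})=\lim_{L\to\infty}\frac1L H_\nu(S_1^L)$ is the metric entropy rate and $h^*_\nu(\mathbf{S})=\lim_{L\to\infty}\frac1{L-1}H_\nu(R_1^L)$ the permutation entropy rate, where $H_\nu$ is Shannon entropy (base 2) under $\nu$, $S_1^L=S_1\cdots S_L$, and $R_n=\sum_{i=1}^n\delta(S_i\le S_n)$ are the rank variables ($\delta(P)=1$ if $P$ holds, else $0$), $R_1^L=R_1\cdots R_L$. *)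

From HB Require Import structures.
From mathcomp Require Import all_boot all_order all_algebra.
From mathcomp Require Import all_classical all_reals all_analysis.
From mathcomp Require Import measurable_realfun.

Set Implicit Arguments.
Unset Strict Implicit.
Unset Printing Implicit Defensive.

Import Order.TTheory GRing.Theory Num.Theory.
Import numFieldNormedType.Exports.
Local Open Scope classical_set_scope.
Local Open Scope ring_scope.

Section SequenceSpace.
(* A : finite totally ordered alphabet; a0 : A witnesses that it is
   nonempty (needed only because measurable spaces in MathComp-Analysis
   must be pointed types). *)
Context {d : Order.disp_t} (A : finOrderType d) (a0 : A).

Definition seqs_of (a : A) : Type := nat -> A.
HB.instance Definition _ := Choice.on (seqs_of a0).
HB.instance Definition _ := isPointed.Build (seqs_of a0) (fun _ => a0).
Local Notation seqs := (seqs_of a0).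

(* Generators of the product sigma-algebra Z on A^N (A discrete):
   the coordinate cylinders {s | s_i = a}. *)
Definition coord_sets : set (set seqs) :=
  [set C | exists (i : nat) (a : A), C = [set s | s i = a]].

Definition seqspace := g_sigma_algebraType coord_sets.

Definition shift (s : seqspace) : seqspace := fun n => s n.+1.

Context {R : realType}.

Definition stationary (nu : probability seqspace R) : Prop :=
  forall C : set seqspace, measurable C -> nu (shift @^-1` C) = nu C.

Definition ergodic (nu : probability seqspace R) : Prop :=
  forall C : set seqspace, measurable C -> shift @^-1` C = C ->
    nu C = 0%E \/ nu C = 1%E.

Definition xlog2 (p : R) : R := if p == 0 then 0 else p * ln p / ln 2.

Definition entropy (V : finType) (nu : probability seqspace R)
  (X : seqspace -> V) : R :=
  - \sum_(v : V) xlog2 (fine (nu (X @^-1` [set v]))).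

(* S_1^L, encoded 0-based as (s_0, ..., s_{L-1}) *)
Definition word (L : nat) (s : seqspace) : {ffun 'I_L -> A} :=
  [ffun i : 'I_L => s (nat_of_ord i)].

(* R_n = sum_{i=1}^n delta(S_i <= S_n); 0-based: position j has rank
   #{ i <= j | s_i <= s_j } (a value in 1..j+1) *)
Definition rank_at (s : seqspace) (j : nat) : nat :=
  \sum_(i < j.+1) ((s i <= s j)%O : nat).

(* R_1^L as a finite-valued variable (ranks are <= L) *)
Definition ranks (L : nat) (s : seqspace) : {ffun 'I_L -> 'I_L.+1} :=
  [ffun j : 'I_L => inord (rank_at s j)].

Definition block_entropy (nu : probability seqspace R) (L : nat) : R :=
  entropy nu (word L).

Definition perm_block_entropy (nu : probability seqspace R) (L : nat) : R :=
  entropy nu (ranks L).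

Definition entropy_rate (nu : probability seqspace R) : R :=
  limn (fun L : nat => block_entropy nu L / L%:R).

Definition perm_entropy_rate_seq (nu : probability seqspace R) (L : nat) : R :=
  perm_block_entropy nu L / (L%:R - 1).

Definition perm_entropy_rate (nu : probability seqspace R) : R :=
  limn (perm_entropy_rate_seq nu).

Definition ergodic_decomposition (m : probability seqspace R)
  (ms : seqspace -> probability seqspace R) : Prop :=
  [/\ forall s, stationary (ms s) /\ ergodic (ms s),
      forall s (C : set seqspace), measurable C -> ms (shift s) C = ms s C,
      forall C : set seqspace, measurable C ->
        measurable_fun setT (fun s => ms s C)
    & forall C : set seqspace, measurable C ->
        m C = (\int[m]_s (ms s C))%E ].

End SequenceSpace.

From HB Require Import structures.
From mathcomp Require Import all_boot all_order all_algebra.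
From mathcomp Require Import all_classical all_reals all_analysis.
From mathcomp Require Import measurable_realfun.
From mathcomp Require Import lra ring.

(* A word is determined by its rank pattern together with its cumulative
   letter counts #{i | w_i <= a}, a in A, so each rank pattern R_1^L has at
   most (L+1)^|A| preimages and H(S_1^L) <= H(R_1^L) + |A| log2 (L+1);
   dividing by L gives h <= h*.  For the second inequality, the law of R_1^L
   under m is the m-average of its laws under the m_s, so concavity of Shannon
   entropy gives the inequality at every L, and Fatou's lemma carries it to the
   limit.  A limit taken with limn is 0 when the sequence
   diverges, which is below the limit inferior of a nonnegative sequence, so
   divergent h_{m_s} or h_m cause no trouble. *)

Set Implicit Arguments.
Unset Strict Implicit.
Unset Printing Implicit Defensive.

Import Order.TTheory GRing.Theory Num.Theory.
Import numFieldNormedType.Exports.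

Section RankPattern.
Context {d : Order.disp_t} {A : finOrderType d} {L : nat}.
Implicit Types (w : {ffun 'I_L -> A}) (i j : 'I_L).

Definition rank_count w j : nat := #|[set i : 'I_L | (i <= j) && (w i <= w j)%O]|.

Definition rank_pattern w : {ffun 'I_L -> 'I_L.+1} := [ffun j => inord (rank_count w j)].

Definition cum_count w (a : A) : nat := #|[set i : 'I_L | (w i <= a)%O]|.

Definition cum_profile w : {ffun A -> 'I_L.+1} := [ffun a => inord (cum_count w a)].

Lemma inord_card_inj (P Q : {set 'I_L}) :
  inord #|P| = inord #|Q| :> 'I_L.+1 -> #|P| = #|Q|.
Proof.
have le_card (S : {set 'I_L}) : #|S| < L.+1.
  by rewrite ltnS -[L in _ <= L]card_ord max_card.
by move=> /(congr1 val); rewrite /= !inordK.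
Qed.

Lemma rank_pattern_count w w' :
  rank_pattern w = rank_pattern w' -> rank_count w =1 rank_count w'.
Proof. by move=> /ffunP E j; have := E j; rewrite !ffunE => /inord_card_inj. Qed.

Lemma cum_profile_count w w' :
  cum_profile w = cum_profile w' -> cum_count w =1 cum_count w'.
Proof. by move=> /ffunP E a; have := E a; rewrite !ffunE => /inord_card_inj. Qed.

(* If i < j has w i <= w j but w' j < w' i, equal rank counts at j provide
   some i' < j with w' i' <= w' j but w j < w i'; comparing i with i' then
   contradicts the order pattern shared before j. *)
Lemma rank_count_le_step w w' j :
  rank_count w j = rank_count w' j ->
  (forall i i', i < i' -> i' < j -> (w i <= w i')%O = (w' i <= w' i')%O) ->
  forall i, i < j -> (w i <= w j)%O -> (w' i <= w' j)%O.
Proof.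
move=> Erank Epat i ij wij; apply: contraT; rewrite -ltNge => w'ji.
set S := [set k : 'I_L | (k <= j) && (w k <= w j)%O].
set S' := [set k : 'I_L | (k <= j) && (w' k <= w' j)%O].
have [i' i'S' i'S] : exists2 i', i' \in S' & i' \notin S.
  apply/exists_inP; apply: contraT; rewrite negb_exists_in => /forall_inP sub.
  have /subset_cardP S'S : #|S'| = #|S| by rewrite [#|S|]Erank.
  have /S'S eqS : S' \subset S by apply/fintype.subsetP => k /sub; rewrite negbK.
  by move: (eqS i); rewrite !inE (ltnW ij) wij leNgt w'ji.
move: i'S' i'S; rewrite !inE => /andP [i'j w'i'j]; rewrite i'j /= -ltNge => wji'.
have i'j' : i' < j.
  by rewrite ltn_neqAle i'j andbT; apply: contraTneq wji' => /val_inj ->; rewrite ltxx.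
have [ii'|i'i|/val_inj eqii'] := ltngtP i i'.
- move: (Epat _ _ ii' i'j'); rewrite (ltW (le_lt_trans wij wji')).
  by rewrite leNgt (le_lt_trans w'i'j w'ji).
- move: (Epat _ _ i'i ij); rewrite leNgt (le_lt_trans wij wji').
  by rewrite (ltW (le_lt_trans w'i'j w'ji)).
- by move: wji'; rewrite -eqii' ltNge wij.
Qed.

Lemma rank_pattern_le w w' : rank_pattern w = rank_pattern w' ->
  forall i j, i < j -> (w i <= w j)%O = (w' i <= w' j)%O.
Proof.
move=> /rank_pattern_count Erank.
suff pat_below n : forall i j, j < n -> i < j -> (w i <= w j)%O = (w' i <= w' j)%O.
  by move=> i j; apply: (pat_below j.+1).
elim: n => [//|n IHn] i j; rewrite ltnS leq_eqVlt => /orP [/eqP jn|]; last exact: IHn.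
have Epat i1 i2 : i1 < i2 -> i2 < j -> (w i1 <= w i2)%O = (w' i1 <= w' i2)%O.
  by move=> i12; rewrite jn => i2n; exact: IHn i2n i12.
move=> ij; apply/idP/idP; first exact: rank_count_le_step (Erank j) Epat i ij.
apply: rank_count_le_step (esym (Erank j)) _ i ij => i1 i2 i12 i2j.
by rewrite Epat.
Qed.

(* The positions up to j in the stable sort of w. *)
Definition sort_prefix w j : {set 'I_L} :=
  [set i : 'I_L | if i <= j then (w i <= w j)%O else (w i < w j)%O].

Lemma rank_pattern_sort_prefix w w' : rank_pattern w = rank_pattern w' ->
  sort_prefix w =1 sort_prefix w'.
Proof.
move=> /rank_pattern_le Epat j; apply/setP => i; rewrite !inE.
case: (ltngtP i j) => [ij|ji|/val_inj ->]; rewrite ?lexx //.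
- exact: Epat.
- by rewrite !ltNge Epat.
Qed.

Lemma cum_count_lt_sort_prefix w w' j : sort_prefix w j = sort_prefix w' j ->
  (w j < w' j)%O -> cum_count w' (w j) < cum_count w (w j).
Proof.
move=> Eprefix wjw'j.
have prefix_sub : sort_prefix w j \subset [set i : 'I_L | (w i <= w j)%O].
  by apply/fintype.subsetP => i; rewrite !inE; case: ifP => // _ /ltW.
have sub_prefix : [set i : 'I_L | (w' i <= w j)%O] \proper sort_prefix w j.
  rewrite properE Eprefix; apply/andP; split.
    apply/fintype.subsetP => i; rewrite !inE => w'iwj.
    by have w'iw'j := le_lt_trans w'iwj wjw'j; case: ifP => _; rewrite ?(ltW w'iw'j).
  by apply/fintype.subsetPn; exists j; rewrite !inE ?leqnn ?lexx // -ltNge.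
exact: leq_trans (proper_card sub_prefix) (subset_leq_card prefix_sub).
Qed.

Lemma rank_pattern_cum_profile_inj w w' :
  rank_pattern w = rank_pattern w' -> cum_profile w = cum_profile w' -> w = w'.
Proof.
move=> /rank_pattern_sort_prefix Eprefix /cum_profile_count Ecum.
apply/ffunP => j; case: (ltgtP (w j) (w' j)) => // [ww'|w'w].
- by have := cum_count_lt_sort_prefix (Eprefix j) ww'; rewrite Ecum ltnn.
- by have := cum_count_lt_sort_prefix (esym (Eprefix j)) w'w; rewrite Ecum ltnn.
Qed.

Lemma card_rank_pattern_fiber (r : {ffun 'I_L -> 'I_L.+1}) :
  #|[set w | rank_pattern w == r]| <= L.+1 ^ #|A|.
Proof.
rewrite -{2}(card_ord L.+1) -card_ffun -(card_in_imset (f := cum_profile)).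
  exact: max_card.
move=> w w'; rewrite !inE => /eqP wr /eqP w'r; apply: rank_pattern_cum_profile_inj.
by rewrite wr w'r.
Qed.

End RankPattern.

Local Open Scope ring_scope.

Section EntropyLn.
Context {R : realType}.

Definition entropy_ln (V : finType) (p : V -> R) : R := - \sum_v p v * ln (p v).

Lemma ln_le_subr1 (t : R) : 0 < t -> ln t <= t - 1.
Proof.
by move=> t0; have := @le_ln1Dx R (t - 1); rewrite addrCA subrr addr0; apply; lra.
Qed.

Lemma le_xlnx (x a : R) : 0 <= x -> 0 < a -> x * ln a + x - a <= x * ln x.
Proof.
move=> x0 a0; have [->|xn0] := eqVneq x 0; first by rewrite !mul0r; lra.
have xp : 0 < x by rewrite lt0r xn0.
have := ler_wpM2l (ltW xp) (ln_le_subr1 (divr_gt0 a0 xp)).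
rewrite ln_div ?posrE // mulrBr mulrBr mulrCA mulfV // mulr1; lra.
Qed.

Lemma neg_xlnx_ge0 (x : R) : 0 <= x <= 1 -> 0 <= - (x * ln x).
Proof. by case/andP => x0 x1; rewrite oppr_ge0 mulr_ge0_le0 // ln_le0. Qed.

Lemma entropy_ln_ge0 (V : finType) (p : V -> R) :
  (forall v, 0 <= p v <= 1) -> 0 <= entropy_ln p.
Proof.
by move=> p01; rewrite /entropy_ln -sumrN sumr_ge0 // => v _; exact: neg_xlnx_ge0.
Qed.

Section Pushforward.
Variables (V W : finType) (f : V -> W) (K : nat).
Hypothesis K_gt0 : (0 < K)%N.
Hypothesis card_fiber : forall w, (#|[set v | f v == w]| <= K)%N.

Definition push (p : V -> R) (w : W) : R := \sum_(v | f v == w) p v.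

Lemma sum_push (p : V -> R) (F : W -> R) :
  \sum_v p v * F (f v) = \sum_w push p w * F w.
Proof.
rewrite (partition_big f xpredT) //=; apply: eq_bigr => w _.
by rewrite /push mulr_suml; apply: eq_bigr => v /eqP ->.
Qed.

(* Gibbs against the guess p v ~ push p (f v) / K, spreading each fiber uniformly. *)
Lemma entropy_ln_push (p : V -> R) : (forall v, 0 <= p v) -> \sum_v p v <= 1 ->
  entropy_ln p <= entropy_ln (push p) + ln K%:R.
Proof.
move=> p0 p1; have K0 : (0 : R) < K%:R by rewrite ltr0n.
have push0 w : 0 <= push p w by exact: sumr_ge0.
have p_le_push v : p v <= push p (f v) by rewrite /push (bigD1 v) //= lerDl sumr_ge0.
have gibbs v : - (p v * ln (p v)) <=
    - (p v * ln (push p (f v))) + p v * ln K%:R + push p (f v) / K%:R - p v.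
  have [pushz|pushn0] := eqVneq (push p (f v)) 0.
    have -> : p v = 0 by apply/le_anti; rewrite p0 -pushz p_le_push.
    by rewrite pushz !mul0r; lra.
  have pushp : 0 < push p (f v) by rewrite lt0r pushn0 push0.
  have := le_xlnx (p0 v) (divr_gt0 pushp K0).
  by rewrite ln_div ?posrE // mulrBr; lra.
have sum_push_const : \sum_w push p w = \sum_v p v.
  have := sum_push p (fun=> 1); under eq_bigr do rewrite mulr1.
  by under [RHS]eq_bigr do rewrite mulr1.
have fibers : \sum_v push p (f v) / K%:R <= \sum_v p v.
  rewrite -sum_push_const; have := sum_push (fun=> 1) (fun w => push p w / K%:R).
  under eq_bigr do rewrite mul1r; move=> ->; apply: ler_sum => w _.
  rewrite mulrCA ler_piMr ?push0 // ler_pdivrMr // mul1r /push sumr_const ler_nat.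
  by apply: leq_trans (card_fiber w); apply: eq_leq; apply: eq_card => v; rewrite inE.
have lnK : 0 <= ln (K%:R : R) by rewrite ln_ge0 // ler1n.
have mass : (\sum_v p v) * ln K%:R <= ln K%:R by rewrite ler_piMl.
rewrite /entropy_ln -sumrN; apply: le_trans (ler_sum _ (fun v _ => gibbs v)) _.
rewrite !big_split /= !sumrN (sum_push p (fun w => ln (push p w))) -mulr_suml; lra.
Qed.
End Pushforward.
End EntropyLn.

Local Open Scope classical_set_scope.
Local Open Scope ring_scope.

Section LogGrowth.
Context {R : realType}.

(* From expR x >= 1 + x^2/2 at x = e n. *)
Lemma ln_natS_le (e : R) (n : nat) : 0 < e -> 2 / e ^+ 2 <= n%:R ->
  ln n.+1%:R <= e * n%:R.
Proof.
move=> e0 ne; rewrite -[leRHS]expRK ler_ln ?posrE ?ltr0n ?expR_gt0 //.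
apply: le_trans (expR_ge1Dxn 1 (mulr_ge0 (ltW e0) (ler0n _ n))).
have e2n : 2 <= e ^+ 2 * n%:R by move: ne; rewrite ler_pdivrMr ?exprn_gt0 // mulrC.
have n0 : (0 : R) <= n%:R := ler0n _ n.
rewrite -natr1 addrC lerD2l (_ : 2`! = 2)%N // ler_pdivlMr // exprMn; nra.
Qed.

Lemma cvg_ln_natS_div : (fun n => ln n.+1%:R / n%:R) @ \oo --> (0 : R).
Proof.
apply/cvgr0Pnorm_le => e e0; near=> n.
have n0 : (0 : R) < n%:R by rewrite ltr0n; near: n; exact: nbhs_infty_gt.
rewrite ger0_norm ?divr_ge0 ?ln_ge0 ?ler1n // ler_pdivrMr //.
by apply: ln_natS_le => //; near: n; exact: nbhs_infty_ger.
Unshelve. all: by end_near.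
Qed.

End LogGrowth.

Section SequenceLimits.
Context {R : realType}.
Implicit Types u v w : nat -> R.

Lemma limn_nocvg u : ~ cvgn u -> limn u = 0.
Proof.
by move=> nc; rewrite /lim /lim_in getPN // => l ul; apply/nc/cvg_ex; exists l.
Qed.

Lemma limn_ge0 u : (forall n, 0 <= u n) -> 0 <= limn u.
Proof.
move=> u0; have [cu|nc] := pselect (cvgn u); last by rewrite (limn_nocvg nc).
by apply: limr_ge => //; exact: filterE.
Qed.

Lemma limn_shiftn u k : limn (fun n => u (n + k)%N) = limn u.
Proof.
have [cu|nc] := pselect (cvgn u).
  by apply: (cvg_lim (@Rhausdorff R)); rewrite (cvg_shiftn k u).
have nc' : ~ cvgn (fun n => u (n + k)%N).
  by move=> /cvg_ex [l]; rewrite (cvg_shiftn k u) => ul; apply/nc/cvg_ex; exists l.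
by rewrite (limn_nocvg nc) (limn_nocvg nc').
Qed.

(* When u diverges, limn u is the junk value 0, hence the hypothesis v >= 0. *)
Lemma limn_le_of_le_add u v w : cvgn v -> w @ \oo --> 0 ->
  (\forall n \near \oo, 0 <= v n) -> (\forall n \near \oo, u n <= v n + w n) ->
  limn u <= limn v.
Proof.
move=> cv w0 v0 uvw; have [cu|nc] := pselect (cvgn u); last first.
  by rewrite (limn_nocvg nc); apply: limr_ge.
have vw : v n + w n @[n --> \oo] --> limn v by rewrite -[limn v]addr0; exact: cvgD.
rewrite -(cvg_lim (@Rhausdorff R) vw); apply: ler_lim uvw => //; exact: cvgP vw.
Qed.

Local Open Scope ereal_scope.

Lemma le_limn_einf (u v : (\bar R)^nat) : (forall n, u n <= v n) ->
  limn_einf u <= limn_einf v.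
Proof.
move=> uv; rewrite !limn_einf_lim; apply: lee_lim; try exact: is_cvg_einfs.
apply: filterE => n; apply: le_ereal_inf_tmp => _ [k /= kn <-].
by apply: le_trans (uv k); apply: ereal_inf_lbound; exists k.
Qed.

Lemma limn_einf_EFin u : cvgn u -> limn_einf (EFin \o u) = (limn u)%:E.
Proof.
move=> cu; apply: (cvg_limn_einf_sup _).1.
by apply: cvg_EFin; [exact: filterE | exact: cu].
Qed.

Lemma limn_le_limn_einf u : (forall n, (0 <= u n)%R) ->
  (limn u)%:E <= limn_einf (EFin \o u).
Proof.
move=> u0; have [cu|nc] := pselect (cvgn u); first by rewrite limn_einf_EFin.
rewrite (limn_nocvg nc); have := @le_limn_einf (fun=> 0) (EFin \o u) (fun n => u0 n).
by rewrite (cvg_limn_einf_sup (cvg_cst (0 : \bar R))).1.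
Qed.

End SequenceLimits.

Section FiniteVariables.
Context (dT : measure_display) (T : measurableType dT) (R : realType).
Implicit Types nu : probability T R.

Definition measurable_fibers (V : Type) (X : T -> V) : Prop :=
  forall v, measurable (X @^-1` [set v]).

Lemma measurable_fibers_preimage (V : finType) (X : T -> V) (S : set V) :
  measurable_fibers X -> measurable (X @^-1` S).
Proof.
move=> mX; rewrite -(image_id S) -bigcup_imset1 preimage_bigcup.
by apply: fin_bigcup_measurable => [|v _]; [exact: finite_finset|exact: mX].
Qed.

Lemma measurable_fibers_comp (V : finType) (W : Type) (X : T -> V) (f : V -> W) :
  measurable_fibers X -> measurable_fibers (f \o X).
Proof. by move=> mX w; rewrite comp_preimage; exact: measurable_fibers_preimage. Qed.

Lemma measure_preimage_pred (mu : {measure set T -> \bar R}) (V : finType)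
    (X : T -> V) (P : pred V) : measurable_fibers X ->
  mu (X @^-1` [set v | P v]) = (\sum_(v | P v) mu (X @^-1` [set v]))%E.
Proof.
move=> mX; rewrite -(image_id [set v | P v]) -bigcup_imset1 preimage_bigcup.
rewrite measure_fin_bigcup //.
- by rewrite [RHS]bigfs ?index_enum_uniq // => v _; rewrite mem_index_enum.
- exact: finite_finset.
- exact: trivIset_preimage1.
Qed.

Definition pr nu (V : Type) (X : T -> V) (v : V) : R := fine (nu (X @^-1` [set v])).

Lemma pr_ge0 nu (V : Type) (X : T -> V) v : 0 <= pr nu X v.
Proof. exact/fine_ge0/measure_ge0. Qed.

Lemma pr_le1 nu (V : Type) (X : T -> V) v : measurable_fibers X -> pr nu X v <= 1.
Proof.
by move=> mX; rewrite -lee_fin fineK ?fin_num_measure ?probability_le1.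
Qed.

Lemma pr_preimage_pred nu (V : finType) (X : T -> V) (P : pred V) :
  measurable_fibers X -> fine (nu (X @^-1` [set v | P v])) = \sum_(v | P v) pr nu X v.
Proof.
by move=> mX; rewrite measure_preimage_pred // sum_fine // => v _; rewrite fin_num_measure.
Qed.

Lemma sum_pr nu (V : finType) (X : T -> V) : measurable_fibers X -> \sum_v pr nu X v = 1.
Proof.
move=> mX; rewrite -pr_preimage_pred //.
by rewrite (_ : _ @^-1` _ = setT) ?probability_setT //; apply/seteqP.
Qed.

Lemma pr_comp nu (V W : finType) (X : T -> V) (f : V -> W) :
  measurable_fibers X -> pr nu (f \o X) = push f (pr nu X).
Proof.
move=> mX; apply/funext => w; rewrite /push -pr_preimage_pred //; congr (fine (nu _)).
by apply/seteqP; split => s /= /eqP.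
Qed.

Lemma entropy_ln_pr_ge0 nu (V : finType) (X : T -> V) :
  measurable_fibers X -> 0 <= entropy_ln (pr nu X).
Proof. by move=> mX; apply: entropy_ln_ge0 => v; rewrite pr_ge0 pr_le1. Qed.

End FiniteVariables.

Section ConcavityOfEntropy.
Context (dT : measure_display) (T : measurableType dT) (R : realType).
Variable mu : probability T R.

Lemma integrable_bounded (f : T -> R) (C : R) : measurable_fun setT f ->
  (forall s, `|f s| <= C) -> mu.-integrable setT (EFin \o f).
Proof.
move=> mf fC; apply: measurable_bounded_integrable => //.
  exact: le_lt_trans (probability_le1 mu measurableT) (ltry 1).
rewrite /bounded_near; near=> M => s _ /=; apply: le_trans (fC s) _.
by near: M; apply: nbhs_pinfty_ge; exact: num_real.
Unshelve. all: by end_near.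
Qed.

Lemma measurable_neg_xlnx (q : T -> R) : measurable_fun setT q ->
  measurable_fun setT (fun s => - (q s * ln (q s))).
Proof.
move=> mq; apply: measurable_funN; apply: measurable_funM => //.
by apply: measurableT_comp => //; exact: measurable_ln.
Qed.

Lemma measurable_entropy_ln (V : finType) (q : V -> T -> R) :
  (forall v, measurable_fun setT (q v)) ->
  measurable_fun setT (fun s => entropy_ln (q ^~ s)).
Proof.
move=> mq; rewrite /entropy_ln; under eq_fun do rewrite -sumrN.
by apply: measurable_sum => v; exact: measurable_neg_xlnx.
Qed.

Section UnitValued.
Variable q : T -> R.
Hypothesis mq : measurable_fun setT q.
Hypothesis q01 : forall s, 0 <= q s <= 1.

Lemma integral_affine (k b : R) :
  (\int[mu]_s (k * q s + b)%:E = (k * \int[mu]_s q s + b)%:E)%E.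
Proof.
have qC s : `|q s| <= 1 by case/andP: (q01 s) => q0 q1; rewrite ger0_norm.
have ikq : mu.-integrable setT (EFin \o (fun s => k * q s)).
  apply: (integrable_bounded (C := `|k|)); first exact: measurable_funM.
  by move=> s; rewrite normrM ler_piMr.
have iq : mu.-integrable setT (EFin \o q) by exact: integrable_bounded qC.
rewrite -[LHS]fineK; last first.
  apply: integrable_fin_num => //.
  apply: (integrable_bounded (f := fun s => k * q s + b) (C := `|k| + `|b|)).
    by apply: measurable_funD => //; exact: measurable_funM.
  by move=> s; apply: le_trans (ler_normD _ _) _; rewrite lerD2r normrM ler_piMr.
congr EFin; rewrite -/(Rintegral mu setT _) RintegralD //.
  have mu1 : (mu : {measure set T -> \bar R}) setT = 1%E := probability_setT mu.
  by rewrite RintegralZl // Rintegral_cst // mu1 mulr1.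
exact: finite_measure_integrable_cst.
Qed.

Lemma integral_neg_xlnx_le (a : R) : 0 < a ->
  (\int[mu]_s (- (q s * ln (q s)))%:E <=
   (- (\int[mu]_s q s * ln a) + a - \int[mu]_s q s)%:E)%E.
Proof.
move=> a0; set p := \int[mu]_s q s.
rewrite (_ : _ + a - p = (- ln a - 1) * p + a); last by ring.
rewrite -integral_affine ge0_le_integral //.
- by move=> s _; rewrite lee_fin neg_xlnx_ge0.
- exact/measurable_EFinP/measurable_neg_xlnx.
- apply/measurable_EFinP; apply: measurable_funD => //; exact: measurable_funM.
- move=> s _; case/andP: (q01 s) => q0 _; have := le_xlnx q0 a0.
  by rewrite lee_fin; lra.
Qed.

Lemma integral_neg_xlnx_concave :
  (\int[mu]_s (- (q s * ln (q s)))%:E <=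
   (- (\int[mu]_s q s * ln (\int[mu]_s q s)))%:E)%E.
Proof.
set p := \int[mu]_s q s.
have p0 : 0 <= p by apply: Rintegral_ge0 => // s _; case/andP: (q01 s).
have [pz|pn0] := eqVneq p 0.
  apply/lee_addgt0Pr => e e0; apply: le_trans (integral_neg_xlnx_le e0) _.
  by rewrite -/p -EFinD lee_fin pz !mul0r; lra.
have p_gt0 : 0 < p by rewrite lt0r pn0.
apply: le_trans (integral_neg_xlnx_le p_gt0) _.
by rewrite -/p addrK.
Qed.

End UnitValued.

Lemma integral_entropy_ln_le (V : finType) (q : V -> T -> R) :
  (forall v, measurable_fun setT (q v)) -> (forall v s, 0 <= q v s <= 1) ->
  (\int[mu]_s (entropy_ln (q ^~ s))%:E <=
   (entropy_ln (fun v => \int[mu]_s q v s))%:E)%E.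
Proof.
move=> mq q01; rewrite /entropy_ln -sumrN -sumEFin.
under eq_integral do rewrite -sumrN -sumEFin.
rewrite ge0_integral_sum //.
- by apply: lee_sum => v _; exact: integral_neg_xlnx_concave.
- by move=> v; apply/measurable_EFinP; exact: measurable_neg_xlnx.
- by move=> v s _; rewrite lee_fin neg_xlnx_ge0.
Qed.

End ConcavityOfEntropy.

Section Fatou.
Context (dT : measure_display) (T : measurableType dT) (R : realType).
Variable mu : {measure set T -> \bar R}.
Local Open Scope ereal_scope.

(* No measurability needed: a nonnegative integral is a supremum over the
   simple functions below the integrand. *)
Lemma ge0_le_integral_nonmeasurable (f g : T -> \bar R) :
  (forall x, 0 <= f x) -> (forall x, f x <= g x) ->
  \int[mu]_x f x <= \int[mu]_x g x.
Proof.
move=> f0 fg; rewrite !ge0_integralE //; last by move=> x _; exact: le_trans (fg x).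
apply: ereal_sup_le => _ [h hf <-]; exists h => // x.
by apply: le_trans (hf x) _; rewrite /patch /=; case: ifP.
Qed.

Lemma integral_limn_le (f : nat -> T -> R) (b : nat -> R) :
  (forall n, measurable_fun setT (f n)) -> (forall n s, (0 <= f n s)%R) ->
  (forall n, \int[mu]_s (f n s)%:E <= (b n)%:E) -> cvgn b ->
  \int[mu]_s (limn (f ^~ s))%:E <= (limn b)%:E.
Proof.
move=> mf f0 fb cb.
have f0E n s : 0 <= (EFin \o f n) s by rewrite lee_fin.
apply: (@le_trans _ _ (\int[mu]_s limn_einf (fun n => (EFin \o f n) s))).
  apply: ge0_le_integral_nonmeasurable => s; first by rewrite lee_fin limn_ge0.
  exact: limn_le_limn_einf.
apply: le_trans (fatou mu measurableT _ (fun n s _ => f0E n s)) _.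
  by move=> n; apply/measurable_EFinP; exact: mf.
by rewrite -limn_einf_EFin //; apply: le_limn_einf.
Qed.

End Fatou.

Section PermutationEntropy.
Context {d : Order.disp_t} (A : finOrderType d) (a0 : A) {R : realType}.
Local Notation T := (seqspace a0).
Implicit Types nu : probability T R.

Lemma measurable_coord i a : measurable [set s : T | s i = a].
Proof. by apply: sub_gen_smallest; exists i, a. Qed.

Lemma measurable_fibers_word L : measurable_fibers (word L : T -> _).
Proof.
move=> x; have -> : word L @^-1` [set x] =
    \bigcap_(i in [set: 'I_L]) [set s : T | s i = x i].
  apply/seteqP; split => s /=; first by move=> <- i _; rewrite ffunE.
  by move=> sx; apply/ffunP => i; rewrite ffunE; exact: sx.
by apply: fin_bigcap_measurable => [|i _]; [exact: finite_finset|exact: measurable_coord].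
Qed.

Lemma rank_at_count L (s : T) (j : 'I_L) : rank_at s j = rank_count (word L s) j.
Proof.
rewrite /rank_at /rank_count (big_ord_widen L (fun i => ((s i <= s j)%O : nat))) //.
rewrite -sum1_card [LHS]big_mkcond [RHS]big_mkcond /=; apply: eq_bigr => i _.
by rewrite inE !ffunE ltnS; case: (i <= j)%N; case: (s i <= s j)%O.
Qed.

Lemma ranksE L : ranks L = rank_pattern \o word L :> (T -> _).
Proof. by apply/funext => s; apply/ffunP => j; rewrite !ffunE rank_at_count. Qed.

Lemma measurable_fibers_ranks L : measurable_fibers (ranks L : T -> _).
Proof. by rewrite ranksE; apply: measurable_fibers_comp; exact: measurable_fibers_word. Qed.

Lemma entropyE nu (V : finType) (X : T -> V) :
  entropy nu X = entropy_ln (pr nu X) / ln 2.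
Proof.
rewrite /entropy /entropy_ln mulNr mulr_suml; congr (- _); apply: eq_bigr => v _.
by rewrite /xlog2 /pr; case: eqP => [->|//]; rewrite !mul0r.
Qed.

Lemma perm_entropy_rate_seqE nu L : perm_entropy_rate_seq nu L =
  (ln 2 * (L%:R - 1))^-1 * entropy_ln (pr nu (ranks L : T -> _)).
Proof. by rewrite /perm_entropy_rate_seq /perm_block_entropy entropyE invfM; ring. Qed.

Lemma ln2_gt0 : (0 : R) < ln 2.
Proof. by rewrite ln_gt0 // ltr1n. Qed.

Lemma perm_block_entropy_ge0 nu L : 0 <= perm_block_entropy nu L.
Proof.
rewrite /perm_block_entropy entropyE divr_ge0 ?(ltW ln2_gt0) //.
apply: entropy_ln_pr_ge0; exact: measurable_fibers_ranks.
Qed.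

Lemma perm_entropy_rate_seq_ge0 nu L : (1 <= L)%N -> 0 <= perm_entropy_rate_seq nu L.
Proof.
by move=> L1; rewrite divr_ge0 ?perm_block_entropy_ge0 // subr_ge0 ler1n.
Qed.

Lemma block_entropy_le nu L :
  block_entropy nu L <= perm_block_entropy nu L + #|A|%:R * ln L.+1%:R / ln 2.
Proof.
rewrite /block_entropy /perm_block_entropy !entropyE -mulrDl.
rewrite ler_pM2r ?invr_gt0 ?ln2_gt0 //.
have mword : measurable_fibers (word L : T -> _) by exact: measurable_fibers_word.
have sum_le1 : \sum_w pr nu (word L : T -> _) w <= 1 by rewrite (sum_pr nu mword).
have := entropy_ln_push (expn_gt0 L.+1 #|A|) (card_rank_pattern_fiber (A := A))
  (fun w => pr_ge0 nu _ w) sum_le1.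
by rewrite -pr_comp // -ranksE natrX lnXn ?ltr0n // -[ln _ *+ _]mulr_natl.
Qed.

Lemma entropy_rate_le_perm_entropy_rate nu : cvgn (perm_entropy_rate_seq nu) ->
  entropy_rate nu <= perm_entropy_rate nu.
Proof.
move=> cvg_perm; pose w L : R := #|A|%:R / ln 2 * (ln L.+1%:R / L%:R).
apply: (limn_le_of_le_add (w := w)) cvg_perm _ _ _.
- by rewrite -(mulr0 (#|A|%:R / ln 2)); apply: cvgMr; exact: cvg_ln_natS_div.
- by apply: filterS (nbhs_infty_ge 1) => L; exact: perm_entropy_rate_seq_ge0.
apply: filterS (nbhs_infty_ge 2) => L L2.
have L0 : (0 : R) < L%:R by rewrite ltr0n; apply: leq_trans L2.
have L1 : (0 : R) < L%:R - 1 by rewrite subr_gt0 ltr1n.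
have -> : w L = #|A|%:R * ln L.+1%:R / ln 2 / L%:R by rewrite /w; ring.
have Linv_ge0 : 0 <= L%:R^-1 :> R by rewrite invr_ge0 ltW.
apply: le_trans (ler_wpM2r Linv_ge0 (block_entropy_le nu L)) _.
rewrite /perm_entropy_rate_seq mulrDl lerD2r ler_wpM2l ?perm_block_entropy_ge0 //.
by rewrite lef_pV2 ?posrE // lerBlDr lerDl.
Qed.

Section Mixture.
Variables (m : probability T R) (ms : T -> probability T R).
Hypothesis measurable_ms :
  forall C : set T, measurable C -> measurable_fun setT (fun s => ms s C).
Hypothesis m_mixture : forall C : set T, measurable C -> m C = (\int[m]_s ms s C)%E.

Lemma measurable_pr_mixture (V : finType) (X : T -> V) v : measurable_fibers X ->
  measurable_fun setT (fun s => pr (ms s) X v).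
Proof.
move=> mX; apply: measurableT_comp (measurable_ms (mX v)).
exact: fine_measurable measurableT.
Qed.

Lemma pr_mixture (V : finType) (X : T -> V) : measurable_fibers X ->
  pr m X = fun v => \int[m]_s pr (ms s) X v.
Proof.
move=> mX; apply/funext => v; rewrite /pr m_mixture //; congr fine.
by apply: eq_integral => s _; rewrite fineK // fin_num_measure.
Qed.

Lemma measurable_perm_entropy_rate_seq L :
  measurable_fun setT (fun s => perm_entropy_rate_seq (ms s) L).
Proof.
under eq_fun do rewrite perm_entropy_rate_seqE.
apply: measurable_funM => //; apply: measurable_entropy_ln => v.
apply: measurable_pr_mixture; exact: measurable_fibers_ranks.
Qed.

Lemma integral_perm_entropy_rate_seq_le L : (1 <= L)%N ->
  (\int[m]_s (perm_entropy_rate_seq (ms s) L)%:E <= (perm_entropy_rate_seq m L)%:E)%E.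
Proof.
move=> L1; have mranks : measurable_fibers (ranks L : T -> _).
  exact: measurable_fibers_ranks.
have c0 : 0 <= (ln 2 * (L%:R - 1))^-1 :> R.
  by rewrite invr_ge0 mulr_ge0 ?(ltW ln2_gt0) // subr_ge0 ler1n.
under eq_integral do rewrite perm_entropy_rate_seqE EFinM.
rewrite ge0_integralZl_EFin //; last 2 first.
- by move=> s _; rewrite lee_fin entropy_ln_pr_ge0.
- apply/measurable_EFinP; apply: measurable_entropy_ln => v.
  exact: measurable_pr_mixture.
rewrite perm_entropy_rate_seqE EFinM lee_wpmul2l ?lee_fin // (pr_mixture mranks).
apply: integral_entropy_ln_le => [v|v s]; first exact: measurable_pr_mixture.
by rewrite pr_ge0 pr_le1.
Qed.

Lemma integral_perm_entropy_rate_le : cvgn (perm_entropy_rate_seq m) ->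
  (\int[m]_s (perm_entropy_rate (ms s))%:E <= (perm_entropy_rate m)%:E)%E.
Proof.
move=> cvg_perm; rewrite /perm_entropy_rate -(limn_shiftn _ 1).
under eq_integral do rewrite -(limn_shiftn _ 1).
apply: integral_limn_le => [n|n s|n|].
- exact: measurable_perm_entropy_rate_seq.
- by apply: perm_entropy_rate_seq_ge0; rewrite addn1.
- by apply: integral_perm_entropy_rate_seq_le; rewrite addn1.
- by apply/cvg_ex; exists (limn (perm_entropy_rate_seq m)); rewrite (cvg_shiftn 1).
Qed.

End Mixture.

End PermutationEntropy.

Theorem corollary1 (R : realType) (d : Order.disp_t) (A : finOrderType d) (a0 : A)
  (m : probability (seqspace a0) R)
  (ms : seqspace a0 -> probability (seqspace a0) R) :
  stationary m ->
  ~ ergodic m ->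
  ergodic_decomposition m ms ->
  m.-integrable setT (fun s => (entropy_rate (ms s))%:E) ->
  cvgn (perm_entropy_rate_seq m) ->
  entropy_rate m <= perm_entropy_rate m /\
  (\int[m]_s (perm_entropy_rate (ms s))%:E <= (perm_entropy_rate m)%:E)%E.
Proof.
move=> _ _ [_ _ measurable_ms m_mixture] _ cvg_perm; split.
- exact: entropy_rate_le_perm_entropy_rate.
- exact: integral_perm_entropy_rate_le.
Qed.
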